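(* Let $N\ge3$, $z=\lfloor N/2\rfloor$, $n=\lfloor (N+1)/2\rfloor$ (so $N=2n$ or $N=2n-1$), $\nu_1,\dots,\nu_z\in\mathbb C$ and let $\mathcal F=\mathcal F^{\mathcal P}_{(z-1)\prec0}(\nu_1,\dots,\nu_z)$ be the full peripheric chain, with twisted coproduct $\Delta_{\mathcal F}(X)=\mathcal F\Delta(X)\mathcal F^{-1}$. Then the following $2n+z-2$ elements are primitive for $\Delta_{\mathcal F}$ (i.e. $\Delta_{\mathcal F}(Y)=Y\otimes1+1\otimes Y$): (i) $\sigma_{k+1,N-k}(\nu_{k+1})$ for $k=0,\dots,z-1$; (ii) $E_{j,N-j}$ for $j=1,\dots,n-1$; (iii) $H^\perp_i$ for $i=1,\dots,n-1$. Moreover $[H^\perp_i,E_{j,N-j}]=\delta_{ij}E_{j,N-j}$, all $H^\perp_i$ commute, and all elements in (i) and (ii) commute with each other.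
   Context: Work over $\mathbb C$ with $U=U(sl(N))$ with primitive generators. $E_{ij}$ are matrix units of $gl(N)$, $I=\sum_sE_{ss}$. $\xi$ is a formal parameter; all computations are in the $\xi$-adically completed algebras $U[[\xi]]$, $(U\otimes U)[[\xi]]$. $\sigma_{ij}(c):=\ln(1+\xi cE_{ij})$; $H^{\mathcal P}_k:=E_{kk}-\frac1NI$; $H^\perp_i:=\frac{N-2i}{N}I-\sum_{m=i+1}^{N-i}E_{mm}$ (a traceless diagonal matrix). For $0\le k\le\lfloor N/2\rfloor-1$, $\mathcal F^{\mathcal P}_k(\nu):=\big(\prod_{s=k+2}^{N-k-1}\exp(\xi\nu E_{k+1,s}\otimes E_{s,N-k})\big)\exp(H^{\mathcal P}_{k+1}\otimes\sigma_{k+1,N-k}(\nu))$ and $\mathcal F^{\mathcal P}_{p\prec0}(\nu_1,\dots,\nu_{p+1}):=\mathcal F^{\mathcal P}_p(\nu_{p+1})\cdots\mathcal F^{\mathcal P}_0(\nu_1)$. *)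

(* Power series in the formal parameter xi over an algebra A
   are modelled as coefficient sequences nat -> A (A[[xi]]). *)
From mathcomp Require Import all_boot all_algebra.
From mathcomp Require Import Rstruct.
From mathcomp.real_closed Require Import complex.
Set Implicit Arguments.
Unset Strict Implicit.
Unset Printing Implicit Defensive.
Import GRing.Theory.
Local Open Scope ring_scope.

Definition Cplx : fieldType := Rdefinitions.R[i].

Section PowerSeries.
Variables (C : fieldType) (A : algType C).

Definition ps := nat -> A.

Definition psC (a : A) : ps := fun n => if n is 0%N then a else 0.
Definition psXi (a : A) : ps := fun n => if n == 1%N then a else 0.
Definition psadd (f g : ps) : ps := fun n => f n + g n.
Definition psopp (f : ps) : ps := fun n => - f n.
Definition psmul (f g : ps) : ps :=
  fun n => \sum_(i < n.+1) f i * g (n - i)%N.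
Definition pspow (f : ps) (k : nat) : ps := iter k (psmul f) (psC 1).
Definition psprod (fs : seq ps) : ps := foldr psmul (psC 1) fs.

(* exp f, for f with zero constant term (the sum is then xi-adically finite) *)
Definition psexp (f : ps) : ps :=
  fun n => \sum_(k < n.+1) (k`!%:R^-1 : C) *: pspow f k n.
(* ln (1 + f), for f with zero constant term *)
Definition psln1p (f : ps) : ps :=
  fun n => \sum_(k < n.+1 | (0 < k)%N)
             (((-1) ^+ k.-1 : C) / k%:R) *: pspow f k n.
(* inverse of f, for f with constant term 1: sum_k (1 - f)^k *)
Definition psinv (f : ps) : ps :=
  fun n => \sum_(k < n.+1) pspow (psadd (psC 1) (psopp f)) k n.

End PowerSeries.

Section GlN.
Variables (C : fieldType) (A : algType C) (N : nat).

(* Indices are 1-based. *)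
Definition gl_family (e : nat -> nat -> A) : Prop :=
  forall i j k l, (0 < i <= N)%N -> (0 < j <= N)%N -> (0 < k <= N)%N ->
    (0 < l <= N)%N ->
    e i j * e k l - e k l * e i j =
      (j == k)%:R *: e i l - (l == i)%:R *: e k j.

(* two families whose elements pairwise commute (images of U (x) 1 and 1 (x) U) *)
Definition commuting_families (x y : nat -> nat -> A) : Prop :=
  forall i j k l, x i j * y k l = y k l * x i j.

(* the coproduct Delta on generators: E |-> E (x) 1 + 1 (x) E *)
Definition fam_add (x y : nat -> nat -> A) : nat -> nat -> A :=
  fun i j => x i j + y i j.

Variable e : nat -> nat -> A.

Definition glI : A := \sum_(1 <= s < N.+1) e s s.
Definition sigma (i j : nat) (c : C) : ps A := psln1p (psXi (c *: e i j)).
Definition HP (k : nat) : A := e k k - (N%:R^-1 : C) *: glI.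
Definition Hperp (i : nat) : A :=
  ((N%:R - (2 * i)%:R) / N%:R : C) *: glI - \sum_(i.+1 <= m < (N - i).+1) e m m.

End GlN.

Section Chain.
Variables (C : fieldType) (A : algType C) (N : nat).
Variables (x y : nat -> nat -> A).
(* x = first tensor factor (E (x) 1), y = second tensor factor (1 (x) E) *)

(* F^P_k(nu) = (prod_{s=k+2}^{N-k-1} exp(xi nu E_{k+1,s} (x) E_{s,N-k}))
               * exp(H^P_{k+1} (x) sigma_{k+1,N-k}(nu)) *)
Definition FP (k : nat) (nu : C) : ps A :=
  psmul
    (psprod [seq psexp (psXi (nu *: (x k.+1 s * y s (N - k)%N)))
            | s <- iota k.+2 (N - 2 * k - 2)])
    (psexp (fun n => HP N x k.+1 * sigma y k.+1 (N - k)%N nu n)).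

(* F^P_{p < 0}(nu_1,...,nu_{p+1}) = F^P_p(nu_{p+1}) ... F^P_0(nu_1);
   nu is 1-indexed: nu_j = nu j *)
Definition FPchain (p : nat) (nu : nat -> C) : ps A :=
  psprod [seq FP k (nu k.+1) | k <- rev (iota 0 p.+1)].

(* twisted coproduct Delta_F(X) = F Delta(X) F^{-1}; DX is Delta(X) *)
Definition twist (F DX : ps A) : ps A := psmul (psmul F DX) (psinv F).

End Chain.

(* Delta(E_{j,N-j}) and Delta(H^perp_i) are primitive for Delta, so their
   primitivity for Delta_F amounts to F commuting with them; for sigma_{k+1,N-k}
   one needs F Delta(sigma) = (sigma (x) 1 + 1 (x) sigma) F instead.  Write
   F = G_{z-1} ... G_0 with G_k = exp(xi nu_{k+1} T_k) exp(H^P_{k+1} (x) sigma_{k+1,N-k}),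
   T_k = sum_s E_{k+1,s} (x) E_{s,N-k}.  All factors but one commute with the
   element at hand, by weight and index bookkeeping in gl(N).  The remaining
   factor is handled by two identities of power series in xi:
   exp(a) b = (b + [a,b]) exp(a) when [a,b] commutes with a, and
   exp(H (x) ln(1+w)) (E (x) 1) = (E (x) 1)(1 + w) exp(H (x) ln(1+w)) when [H,E] = E.
   For sigma the latter turns 1 + xi nu Delta(E) into
   (1 + xi nu E (x) 1)(1 + xi nu 1 (x) E), whose logarithm is sigma (x) 1 + 1 (x) sigma.
   The exp/ln identities over a noncommutative coefficient algebra follow from
   uniqueness of solutions of xi W' = Q W with W(0) = 0. *)

From HB Require Import structures.
From mathcomp Require Import all_boot all_algebra.
From mathcomp Require Import boolp zify.
From mathcomp Require Import Rstruct.
From mathcomp.real_closed Require Import complex.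
Set Implicit Arguments.
Unset Strict Implicit.
Unset Printing Implicit Defensive.
Import GRing.Theory.
Local Open Scope ring_scope.

Lemma commrZ (R : pzRingType) (B : algType R) (c : R) (u v : B) :
  GRing.comm u v -> GRing.comm u (c *: v).
Proof. by move=> uv; rewrite /GRing.comm -scalerAl -scalerAr uv. Qed.

Lemma commrZZ (R : pzRingType) (B : algType R) (c d : R) (u v : B) :
  GRing.comm u v -> GRing.comm (c *: u) (d *: v).
Proof. by move=> uv; apply/commrZ/commr_sym/commrZ/commr_sym. Qed.

Section PowerSeriesAlgebra.
Variables (C : fieldType) (A : algType C).
Implicit Types (f g h : ps A) (c : C).

HB.instance Definition _ := Choice.on (ps A).

Definition ps0 : ps A := fun _ => 0.

Lemma psaddA : associative (@psadd C A).
Proof. by move=> f g h; apply/funext => n; apply: addrA. Qed.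
Lemma psaddC : commutative (@psadd C A).
Proof. by move=> f g; apply/funext => n; apply: addrC. Qed.
Lemma psadd0 : left_id ps0 (@psadd C A).
Proof. by move=> f; apply/funext => n; apply: add0r. Qed.
Lemma psaddN : left_inverse ps0 (@psopp C A) (@psadd C A).
Proof. by move=> f; apply/funext => n; apply: addNr. Qed.

HB.instance Definition _ := GRing.isZmodule.Build (ps A) psaddA psaddC psadd0 psaddN.

Lemma ps_addE f g n : (f + g) n = f n + g n. Proof. by []. Qed.

(* Associativity is inherited from polynomials: the coefficients of f * g
   below m only involve the truncations of f and g below m. *)
Definition trunc_poly m f : {poly A} := \poly_(i < m) f i.

Lemma psmul_trunc_poly f g m n : (n < m)%N ->
  psmul f g n = (trunc_poly m f * trunc_poly m g)`_n.
Proof.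
move=> ltnm; rewrite coefM; apply: eq_bigr => i _; rewrite !coef_poly.
have ltim : (i < m)%N by apply: leq_ltn_trans ltnm; rewrite -ltnS.
by rewrite ltim (leq_ltn_trans (leq_subr _ _) ltnm).
Qed.

Lemma psmulA : associative (@psmul C A).
Proof.
move=> f g h; apply/funext => n.
transitivity ((trunc_poly n.+1 f * (trunc_poly n.+1 g * trunc_poly n.+1 h))`_n).
  rewrite coefM; apply: eq_bigr => i _; rewrite coef_poly ltn_ord.
  by rewrite (psmul_trunc_poly _ _ (leq_ltn_trans (leq_subr _ _) (ltnSn n))).
rewrite mulrA coefM; apply: eq_bigr => i _.
rewrite (psmul_trunc_poly _ _ (ltn_ord i)) coef_poly.
by rewrite (leq_ltn_trans (leq_subr _ _) (ltnSn n)).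
Qed.

Lemma psmul1 : left_id (psC 1) (@psmul C A).
Proof.
move=> f; apply/funext => n; rewrite /psmul big_ord_recl subn0 mul1r.
by rewrite big1 ?addr0 // => i _; rewrite mul0r.
Qed.

Lemma psmulr1 : right_id (psC 1) (@psmul C A).
Proof.
move=> f; apply/funext => n; rewrite /psmul big_ord_recr /= subnn mulr1.
rewrite big1 ?add0r // => i _ /=.
case E: (n - i)%N => [|k]; last by rewrite mulr0.
by move: (ltn_ord i); rewrite -subn_gt0 E.
Qed.

Lemma psmulDl : left_distributive (@psmul C A) +%R.
Proof.
move=> f g h; apply/funext => n; rewrite ps_addE /psmul -big_split.
by apply: eq_bigr => i _; apply: mulrDl.
Qed.

Lemma psmulDr : right_distributive (@psmul C A) +%R.
Proof.
move=> f g h; apply/funext => n; rewrite ps_addE /psmul -big_split.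
by apply: eq_bigr => i _; apply: mulrDr.
Qed.

Lemma psC1_neq0 : psC 1 != 0 :> ps A.
Proof. by apply/eqP => /(congr1 (fun f : ps A => f 0%N))/eqP; rewrite oner_eq0. Qed.

HB.instance Definition _ := GRing.Zmodule_isNzRing.Build (ps A)
  psmulA psmul1 psmulr1 psmulDl psmulDr psC1_neq0.

Definition psscale c f : ps A := fun n => c *: f n.

Lemma psscaleA c1 c2 f : psscale c1 (psscale c2 f) = psscale (c1 * c2) f.
Proof. by apply/funext => n; apply: scalerA. Qed.
Lemma psscale1 : left_id 1 psscale.
Proof. by move=> f; apply/funext => n; apply: scale1r. Qed.
Lemma psscaleDr : right_distributive psscale +%R.
Proof. by move=> c f g; apply/funext => n; apply: scalerDr. Qed.
Lemma psscaleDl f : {morph psscale^~ f : c1 c2 / c1 + c2}.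
Proof. by move=> c1 c2; apply/funext => n; apply: scalerDl. Qed.

HB.instance Definition _ := GRing.Zmodule_isLmodule.Build C (ps A)
  psscaleA psscale1 psscaleDr psscaleDl.

Lemma ps_scaleE c f n : (c *: f) n = c *: f n. Proof. by []. Qed.
Lemma ps_mulE f g n : (f * g) n = \sum_(i < n.+1) f i * g (n - i)%N.
Proof. by []. Qed.

Lemma psscaleAl c f g : c *: (f * g) = (c *: f) * g.
Proof.
apply/funext => n; rewrite ps_scaleE !ps_mulE scaler_sumr.
by apply: eq_bigr => i _; rewrite scalerAl.
Qed.

HB.instance Definition _ := GRing.Lmodule_isLalgebra.Build C (ps A) psscaleAl.

Lemma psscaleAr c f g : c *: (f * g) = f * (c *: g).
Proof.
apply/funext => n; rewrite ps_scaleE !ps_mulE scaler_sumr.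
by apply: eq_bigr => i _; rewrite scalerAr.
Qed.

HB.instance Definition _ := GRing.Lalgebra_isAlgebra.Build C (ps A) psscaleAr.

Lemma ps_oppE f n : (- f) n = - f n. Proof. by []. Qed.
Lemma ps_subE f g n : (f - g) n = f n - g n. Proof. by []. Qed.
Lemma ps_mul0E f g : (f * g) 0%N = f 0%N * g 0%N.
Proof. by rewrite ps_mulE big_ord1 subn0. Qed.

Lemma ps_sumE (I : Type) (r : seq I) (P : pred I) (F : I -> ps A) n :
  (\sum_(i <- r | P i) F i) n = \sum_(i <- r | P i) F i n.
Proof.
elim: r => [|i r IHr]; first by rewrite !big_nil.
by rewrite !big_cons; case: (P i); rewrite ?ps_addE IHr.
Qed.

Lemma pspowE f k : pspow f k = f ^+ k.
Proof. by elim: k => [|k IHk] //; rewrite exprS -IHk. Qed.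

Lemma psprodE (fs : seq (ps A)) : psprod fs = \prod_(f <- fs) f.
Proof. by elim: fs => [|f fs IHfs]; rewrite ?big_nil ?big_cons //= -IHfs. Qed.

End PowerSeriesAlgebra.

Section Truncation.
Variables (C : fieldType) (A : algType C).
Implicit Types (f g h a b J Ji : ps A) (c : nat -> C).

Definition vanish_below k f := forall n, (n < k)%N -> f n = 0.
Definition eq_below m f g := forall n, (n < m)%N -> f n = g n.

Lemma vanish_belowM p q f g :
  vanish_below p f -> vanish_below q g -> vanish_below (p + q) (f * g).
Proof.
move=> vf vg n ltn; rewrite ps_mulE big1 // => i _.
have [ltip|leip] := ltnP i p; first by rewrite vf ?mul0r.
by rewrite vg ?mulr0 //; move: (ltn_ord i); lia.
Qed.

Lemma vanish_below_expr f k : f 0%N = 0 -> vanish_below k (f ^+ k).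
Proof.
move=> f0; elim: k => [|k IHk] // ; rewrite exprS -add1n.
by apply: vanish_belowM IHk; case.
Qed.

Lemma eq_belowM m f f' g g' :
  eq_below m f f' -> eq_below m g g' -> eq_below m (f * g) (f' * g').
Proof.
move=> ef eg n ltnm; rewrite !ps_mulE; apply: eq_bigr => i _.
rewrite ef ?eg //; last by apply: leq_ltn_trans ltnm; rewrite -ltnS.
exact: leq_ltn_trans (leq_subr _ _) ltnm.
Qed.

Lemma eq_belowMl m f g g' : eq_below m g g' -> eq_below m (f * g) (f * g').
Proof. exact: eq_belowM. Qed.

Lemma eq_belowMr m f f' g : eq_below m f f' -> eq_below m (f * g) (f' * g).
Proof. by move=> ef; apply: eq_belowM. Qed.

Lemma eq_from_below f g : (forall m, eq_below m f g) -> f = g.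
Proof. by move=> e; apply/funext => n; apply: (e n.+1). Qed.

(* Meaningful when f 0 = 0: then f^k vanishes below degree k, so only k <= n
   contributes to the n-th coefficient. *)
Definition pseries c f : ps A := fun n => \sum_(k < n.+1) c k *: (f ^+ k) n.

Lemma pseries0E c f : pseries c f 0%N = c 0%N *: 1.
Proof. by rewrite /pseries big_ord1. Qed.

Lemma pseries_trunc c m f : f 0%N = 0 ->
  eq_below m (pseries c f) (\sum_(k < m) c k *: f ^+ k).
Proof.
move=> f0 n ltnm; rewrite /pseries ps_sumE.
rewrite (big_ord_widen m (fun k => c k *: (f ^+ k) n) ltnm) big_mkcond.
apply: eq_bigr => k _ /=; case: ltnP => // lenk.
by rewrite ps_scaleE vanish_below_expr ?scaler0.
Qed.

Lemma pseries_intertwine c a (a' : ps A) b : a 0%N = 0 -> a' 0%N = 0 ->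
  a * b = b * a' -> pseries c a * b = b * pseries c a'.
Proof.
move=> a0 a'0 ab; have abk k : a ^+ k * b = b * a' ^+ k.
  elim: k => [|k IHk]; first by rewrite !expr0 mul1r mulr1.
  by rewrite !exprS -mulrA IHk !mulrA ab.
apply: eq_from_below => m n ltnm.
rewrite (eq_belowMr b (pseries_trunc c (m:=m) a0) ltnm).
rewrite (eq_belowMl b (pseries_trunc c (m:=m) a'0) ltnm).
rewrite mulr_suml mulr_sumr; congr (_ n); apply: eq_bigr => k _.
by rewrite -scalerAl -scalerAr abk.
Qed.

Lemma pseries_conj c J Ji g : J * Ji = 1 -> Ji * J = 1 -> g 0%N = 0 ->
  pseries c (J * g * Ji) = J * pseries c g * Ji.
Proof.
move=> JJi JiJ g0; have Jg0 : (J * g * Ji) 0%N = 0 by rewrite !ps_mul0E g0 mulr0 mul0r.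
rewrite -[LHS]mulr1 -JJi mulrA (pseries_intertwine _ Jg0 g0) //.
by rewrite -mulrA JiJ mulr1.
Qed.

Lemma psexpE f : psexp f = pseries (fun k => k`!%:R^-1) f.
Proof. by apply/funext => n; apply: eq_bigr => k _; rewrite pspowE. Qed.

(* At k = 0 the coefficient is 1 / 0 = 0, so the filter k > 0 can be dropped. *)
Lemma psln1pE f : psln1p f = pseries (fun k => (-1) ^+ k.-1 / k%:R) f.
Proof.
apply/funext => n; rewrite /psln1p /pseries big_mkcond; apply: eq_bigr => -[[|k] ?] _.
  by rewrite /= invr0 mulr0 scale0r.
by rewrite pspowE.
Qed.

Lemma psinvE f : psinv f = pseries (fun _ => 1) (1 - f).
Proof. by apply/funext => n; apply: eq_bigr => k _; rewrite pspowE scale1r. Qed.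

Lemma psexp0E f : psexp f 0%N = 1.
Proof. by rewrite psexpE pseries0E invr1 scale1r. Qed.

Lemma psln1p0E f : psln1p f 0%N = 0.
Proof. by rewrite psln1pE pseries0E invr0 mulr0 scale0r. Qed.

Lemma psinv_inverse f : f 0%N = 1 -> f * psinv f = 1 /\ psinv f * f = 1.
Proof.
move=> f0; set u := 1 - f.
have u0 : u 0%N = 0 by rewrite /u ps_subE f0 subrr.
have fE : f = 1 - u by rewrite /u opprB addrC subrK.
have geom m : (\sum_(k < m) u ^+ k) * f = 1 - u ^+ m /\ f * \sum_(k < m) u ^+ k = 1 - u ^+ m.
  have cu : GRing.comm u (\sum_(k < m) u ^+ k) by apply: commr_sum => k _; apply: commrX.
  have e : 1 - u ^+ m = (1 - u) * \sum_(k < m) u ^+ k.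
    by rewrite -opprB subrX1 -mulNr opprB.
  by rewrite fE e; split=> //; rewrite mulrBr mulrBl mulr1 mul1r cu.
have lim m : eq_below m (1 - u ^+ m) 1.
  by move=> n ltnm; rewrite ps_subE vanish_below_expr ?subr0.
have trunc m : eq_below m (psinv f) (\sum_(k < m) u ^+ k).
  move=> n ltnm; rewrite psinvE (pseries_trunc _ u0 ltnm) !ps_sumE.
  by apply: eq_bigr => k _; rewrite scale1r.
split; apply: eq_from_below => m n ltnm.
  by rewrite (eq_belowMl f (trunc m) ltnm) (geom m).2 lim.
by rewrite (eq_belowMr f (trunc m) ltnm) (geom m).1 lim.
Qed.

Lemma twist_intertwine (F X Y : ps A) : F 0%N = 1 -> F * X = Y * F -> twist F X = Y.
Proof.
move=> F0 FXY; have [FV _] := psinv_inverse F0.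
by rewrite -[twist F X]/(F * X * psinv F) FXY -mulrA FV mulr1.
Qed.

End Truncation.

Section ConstantsAndMonomials.
Variables (C : fieldType) (A : algType C).
Implicit Types (f g : ps A) (u v : A).

Lemma psC_is_zmod_morphism : zmod_morphism (@psC C A).
Proof. by move=> u v; apply/funext => n; rewrite ps_subE; case: n => [|n] //; rewrite subr0. Qed.

HB.instance Definition _ :=
  GRing.isZmodMorphism.Build A (ps A) (@psC C A) psC_is_zmod_morphism.

Lemma psC_mulE u f n : (psC u * f) n = u * f n.
Proof.
by rewrite ps_mulE big_ord_recl subn0 big1 ?addr0 // => i _; rewrite mul0r.
Qed.

Lemma mul_psCE f u n : (f * psC u) n = f n * u.
Proof.
rewrite ps_mulE big_ord_recr /= subnn big1 ?add0r // => i _ /=.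
case E: (n - i)%N => [|k]; last by rewrite mulr0.
by move: (ltn_ord i); rewrite -subn_gt0 E.
Qed.

Lemma psC_is_monoid_morphism : monoid_morphism (@psC C A).
Proof.
split=> // u v; apply/funext => n.
by rewrite psC_mulE; case: n => [|n] /=; rewrite ?mulr0.
Qed.

HB.instance Definition _ :=
  GRing.isMonoidMorphism.Build A (ps A) (@psC C A) psC_is_monoid_morphism.

Lemma psXi_is_zmod_morphism : zmod_morphism (@psXi C A).
Proof. by move=> u v; apply/funext => n; rewrite ps_subE /psXi; case: eqP; rewrite ?subr0. Qed.

HB.instance Definition _ :=
  GRing.isZmodMorphism.Build A (ps A) (@psXi C A) psXi_is_zmod_morphism.

Lemma psC_psXi u v : psC u * psXi v = psXi (u * v).
Proof. by apply/funext => n; rewrite psC_mulE /psXi; case: eqP; rewrite ?mulr0. Qed.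

Lemma psXi_psC u v : psXi u * psC v = psXi (u * v).
Proof. by apply/funext => n; rewrite mul_psCE /psXi; case: eqP; rewrite ?mul0r. Qed.

Definition coef_comm f g := forall i j, GRing.comm (f i) (g j).

Lemma coef_comm_sym f g : coef_comm f g -> coef_comm g f.
Proof. by move=> fg i j; apply/commr_sym. Qed.

Lemma coef_comm_comm f g : coef_comm f g -> GRing.comm f g.
Proof.
move=> fg; apply/funext => n; rewrite !ps_mulE [RHS](reindex_inj rev_ord_inj) /=.
by apply: eq_bigr => i _; rewrite fg subSS subKn // -ltnS.
Qed.

Lemma coef_commDl f g h : coef_comm f h -> coef_comm g h -> coef_comm (f + g) h.
Proof. by move=> fh gh i j; apply/commr_sym/commrD; apply/commr_sym. Qed.

Lemma coef_commMl f g h : coef_comm f h -> coef_comm g h -> coef_comm (f * g) h.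
Proof.
move=> fh gh i j; apply/commr_sym; rewrite ps_mulE.
by apply: commr_sum => k _; apply/commrM; apply/commr_sym.
Qed.

Lemma coef_comm1l h : coef_comm 1 h.
Proof. by move=> [|i] j; [apply/commr_sym/commr1 | apply/commr_sym/commr0]. Qed.

Lemma coef_comm_exprl f h k : coef_comm f h -> coef_comm (f ^+ k) h.
Proof.
move=> fh; elim: k => [|k IHk]; first exact: coef_comm1l.
by rewrite exprS; apply: coef_commMl.
Qed.

Lemma coef_comm_pseriesl c f h : f 0%N = 0 -> coef_comm f h -> coef_comm (pseries c f) h.
Proof.
move=> f0 fh i j; rewrite (pseries_trunc c (m:=i.+1) f0 (ltnSn i)) ps_sumE.
apply/commr_sym/commr_sum => k _; rewrite ps_scaleE /GRing.comm.
by rewrite -scalerAl -scalerAr coef_comm_exprl.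
Qed.

Lemma coef_commDr f g h : coef_comm h f -> coef_comm h g -> coef_comm h (f + g).
Proof. by move=> hf hg; apply/coef_comm_sym/coef_commDl; apply/coef_comm_sym. Qed.

Lemma coef_commMr f g h : coef_comm h f -> coef_comm h g -> coef_comm h (f * g).
Proof. by move=> hf hg; apply/coef_comm_sym/coef_commMl; apply/coef_comm_sym. Qed.

Lemma coef_comm_pseriesr c f h : f 0%N = 0 -> coef_comm h f -> coef_comm h (pseries c f).
Proof. by move=> f0 hf; apply/coef_comm_sym/coef_comm_pseriesl/coef_comm_sym. Qed.

Lemma coef_comm_psC_psC u v : GRing.comm u v -> coef_comm (psC u) (psC v).
Proof. by move=> uv [|i] [|j]; rewrite /GRing.comm /= ?mulr0 ?mul0r. Qed.

Lemma coef_comm_psC_psXi u v : GRing.comm u v -> coef_comm (psC u) (psXi v).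
Proof.
by move=> uv [|i] j; rewrite /GRing.comm /psXi /=; case: eqP; rewrite ?mulr0 ?mul0r.
Qed.

Lemma coef_comm_psXi_psXi u v : GRing.comm u v -> coef_comm (psXi u) (psXi v).
Proof.
by move=> uv i j; rewrite /GRing.comm /psXi; do 2 case: eqP; rewrite ?mulr0 ?mul0r.
Qed.

Lemma coef_comm_psXiZ f u (c : C) : coef_comm f (psC u) -> coef_comm f (psXi (c *: u)).
Proof. by move=> fu i j; rewrite /psXi; case: eqP => _; [apply/commrZ/(fu i 0%N) | apply: commr0]. Qed.

Lemma coef_comm_psexpr f g : g 0%N = 0 -> coef_comm f g -> coef_comm f (psexp g).
Proof. by rewrite psexpE; apply: coef_comm_pseriesr. Qed.

Lemma coef_comm_psln1pl f g : f 0%N = 0 -> coef_comm f g -> coef_comm (psln1p f) g.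
Proof. by rewrite psln1pE; apply: coef_comm_pseriesl. Qed.

Lemma coef_comm_psln1pr f g : g 0%N = 0 -> coef_comm f g -> coef_comm f (psln1p g).
Proof. by rewrite psln1pE; apply: coef_comm_pseriesr. Qed.

Lemma coef_comm_psln1p_psC u v (c : C) : GRing.comm u v ->
  coef_comm (psln1p (psXi (c *: u))) (psC v).
Proof.
move=> uv; apply: coef_comm_psln1pl => //; apply/coef_comm_sym/coef_comm_psC_psXi.
exact/commrZ/commr_sym.
Qed.

End ConstantsAndMonomials.

Section EulerOperator.
Variables (C : fieldType) (A : algType C).
Hypothesis natr_neq0 : forall k, (k.+1%:R : C) != 0.
Implicit Types (f g h a b d q u v W Q : ps A).

(* euler f is xi * d f / d xi. *)
Definition euler f : ps A := fun n => n%:R *: f n.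

Lemma euler0E f : euler f 0%N = 0. Proof. exact: scale0r. Qed.

Lemma euler_is_zmod_morphism : zmod_morphism euler.
Proof. by move=> f g; apply/funext => n; rewrite /euler !ps_subE scalerBr. Qed.

HB.instance Definition _ :=
  GRing.isZmodMorphism.Build (ps A) (ps A) euler euler_is_zmod_morphism.

Lemma eulerZ c f : euler (c *: f) = c *: euler f.
Proof. by apply/funext => n; rewrite /euler !ps_scaleE !scalerA mulrC. Qed.

Lemma euler1 : euler 1 = 0.
Proof. by apply/funext => -[|n]; rewrite /euler ?scale0r ?scaler0. Qed.

Lemma eulerM f g : euler (f * g) = euler f * g + f * euler g.
Proof.
apply/funext => n; rewrite ps_addE /euler !ps_mulE scaler_sumr -big_split /=.
apply: eq_bigr => i _; rewrite -scalerAl -scalerAr -scalerDl -natrD.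
by rewrite subnKC // -ltnS.
Qed.

Lemma eulerX f k : GRing.comm f (euler f) ->
  euler (f ^+ k.+1) = k.+1%:R *: (euler f * f ^+ k).
Proof.
move=> ff'; elim: k => [|k IHk]; first by rewrite expr1 expr0 mulr1 scale1r.
rewrite exprS eulerM IHk -scalerAr mulrA ff' -mulrA -exprS.
by rewrite -[k.+2]add1n natrD scalerDl scale1r.
Qed.

Lemma coef_comm_eulerl f g : coef_comm f g -> coef_comm (euler f) g.
Proof. by move=> fg i j; rewrite /GRing.comm -scalerAl -scalerAr fg. Qed.

Lemma coef_comm_eulerr f g : coef_comm f g -> coef_comm f (euler g).
Proof. by move=> fg; apply/coef_comm_sym/coef_comm_eulerl/coef_comm_sym. Qed.

Lemma comm_euler f g : coef_comm f g -> GRing.comm f (euler g).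
Proof. by move=> fg; apply/coef_comm_comm/coef_comm_eulerr. Qed.

(* Uniqueness for the linear equation xi W' = Q W with W(0) = 0: the
   coefficient equation in degree n + 1 only involves W below n + 1. *)
Lemma euler_ode_eq0 W Q : W 0%N = 0 -> Q 0%N = 0 -> euler W = Q * W -> W = 0.
Proof.
move=> W0 Q0 eW; suff Wn n : forall k, (k <= n)%N -> W k = 0.
  by apply/funext => k; apply: (Wn k).
elim: n => [|n IHn] k; first by rewrite leqn0 => /eqP ->.
rewrite leq_eqVlt => /orP[/eqP ->|]; last exact: IHn.
have := congr1 (fun f => f n.+1) eW; rewrite /euler ps_mulE big_ord_recl Q0 mul0r add0r.
rewrite big1 => [eWn|i _]; last by rewrite IHn ?mulr0 // subSS leq_subr.
by rewrite -[W _]scale1r -(mulVf (natr_neq0 n)) -scalerA eWn scaler0.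
Qed.

Definition exp_trunc m f : ps A := \sum_(k < m) k`!%:R^-1 *: f ^+ k.

Lemma psexp_trunc m f : f 0%N = 0 -> eq_below m (psexp f) (exp_trunc m f).
Proof. by rewrite psexpE; apply: pseries_trunc. Qed.

Lemma fact_scaleS k : (k.+1`!%:R^-1 : C) * k.+1%:R = k`!%:R^-1.
Proof.
have fact_neq0 j : (j`!%:R : C) != 0.
  by elim: j => [|j IHj]; rewrite ?oner_eq0 // factS natrM mulf_neq0.
by rewrite factS natrM invfM mulrAC mulVf ?mul1r.
Qed.

Lemma euler_exp_trunc m f : GRing.comm f (euler f) ->
  euler (exp_trunc m.+1 f) = euler f * exp_trunc m f.
Proof.
move=> ff'; rewrite /exp_trunc big_ord_recl raddfD raddf_sum /= expr0 eulerZ euler1.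
rewrite scaler0 add0r mulr_sumr; apply: eq_bigr => k _.
by rewrite eulerZ eulerX // scalerA fact_scaleS -scalerAr.
Qed.

Lemma euler_psexp f : f 0%N = 0 -> GRing.comm f (euler f) ->
  euler (psexp f) = euler f * psexp f.
Proof.
move=> f0 ff'; apply: eq_from_below => m n ltnm.
have /(_ n (ltnW ltnm)) -> : eq_below m.+1 (euler (psexp f)) (euler (exp_trunc m.+1 f)).
  by move=> k ltkm; rewrite /euler (psexp_trunc (m:=m.+1) f0 ltkm).
by rewrite euler_exp_trunc // (eq_belowMl _ (psexp_trunc (m:=m) f0) ltnm).
Qed.

Lemma psexpD a d : a 0%N = 0 -> d 0%N = 0 ->
  coef_comm a a -> coef_comm d d -> coef_comm a d ->
  psexp (a + d) = psexp a * psexp d.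
Proof.
move=> a0 d0 aa dd ad; set s := a + d.
have s0 : s 0%N = 0 by rewrite /s ps_addE a0 d0 addr0.
have ss : coef_comm s s.
  by apply: coef_commDl; apply: coef_commDr => //; apply: coef_comm_sym.
have e_s := euler_psexp s0 (comm_euler ss).
have e_ad : euler (psexp a * psexp d) = euler s * (psexp a * psexp d).
  have ea_d : GRing.comm (psexp a) (euler d).
    by apply/comm_euler/coef_comm_sym/coef_comm_psexpr => //; apply: coef_comm_sym.
  rewrite eulerM (euler_psexp a0 (comm_euler aa)) (euler_psexp d0 (comm_euler dd)).
  by rewrite mulrA ea_d -!mulrA -mulrDl raddfD.
apply/eqP; rewrite -subr_eq0; apply/eqP; apply: (euler_ode_eq0 (Q := euler s)).
- by rewrite ps_subE ps_mul0E !psexp0E mulr1 subrr.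
- exact: euler0E.
by rewrite raddfB /= e_s e_ad mulrBr.
Qed.

Lemma euler_psln1p g : g 0%N = 0 -> coef_comm g g ->
  euler (psln1p g) * (1 + g) = euler g.
Proof.
move=> g0 gg.
have sgnE j : ((-1) ^+ j : C) *: g ^+ j = (- g) ^+ j.
  elim: j => [|j IHj]; first by rewrite !expr0 scale1r.
  by rewrite !exprS -scalerA -IHj scalerAr scaleN1r mulNr -scalerAr.
set v := - g.
have gg' := comm_euler gg.
have geom m : (\sum_(j < m) v ^+ j) * (1 + g) = 1 - v ^+ m.
  have cv : GRing.comm v (\sum_(j < m) v ^+ j) by apply: commr_sum => j _; apply: commrX.
  have -> : 1 - v ^+ m = (1 - v) * \sum_(j < m) v ^+ j.
    by rewrite -opprB subrX1 -mulNr opprB.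
  have -> : 1 + g = 1 - v by rewrite /v opprK.
  by rewrite mulrBr mulrBl mulr1 mul1r cv.
have eT m : euler (\sum_(k < m.+1) ((-1) ^+ k.-1 / k%:R) *: g ^+ k) =
            euler g * \sum_(j < m) v ^+ j.
  rewrite big_ord_recl /= invr0 mulr0 scale0r add0r raddf_sum /= mulr_sumr.
  apply: eq_bigr => k _; rewrite eulerZ eulerX // scalerA divfK //.
  by rewrite add0n scalerAr sgnE.
apply: eq_from_below => m n ltnm.
have /(_ n (ltnW ltnm)) -> : eq_below m.+1 (euler (psln1p g) * (1 + g))
    (euler (\sum_(k < m.+1) ((-1) ^+ k.-1 / k%:R) *: g ^+ k) * (1 + g)).
  apply: eq_belowMr => k ltkm; rewrite /euler psln1pE.
  by rewrite (pseries_trunc _ g0 ltkm).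
have vm : vanish_below m (euler g * v ^+ m).
  apply: (vanish_belowM (p := 0)) => //; apply: vanish_below_expr.
  by rewrite /v ps_oppE g0 oppr0.
by rewrite eT -mulrA geom mulrBr mulr1 ps_subE vm ?subr0.
Qed.

Lemma psexp_psln1p g : g 0%N = 0 -> coef_comm g g -> psexp (psln1p g) = 1 + g.
Proof.
move=> g0 gg; set L := psln1p g.
have LL : coef_comm L L by apply: coef_comm_psln1pl => //; apply: coef_comm_psln1pr.
have e_L := euler_psexp (psln1p0E g) (comm_euler LL).
apply/eqP; rewrite -subr_eq0; apply/eqP; apply: (euler_ode_eq0 (Q := euler L)).
- by rewrite ps_subE psexp0E ps_addE g0 addr0 subrr.
- exact: euler0E.
by rewrite raddfB /= e_L raddfD /= euler1 add0r mulrBr euler_psln1p.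
Qed.

Lemma psln1p_mul u v : u 0%N = 0 -> v 0%N = 0 ->
  coef_comm u u -> coef_comm v v -> coef_comm u v ->
  psln1p (u + v + u * v) = psln1p u + psln1p v.
Proof.
move=> u0 v0 uu vv uv; set g := u + v + u * v.
have g0 : g 0%N = 0 by rewrite /g !ps_addE ps_mul0E u0 v0 mulr0 !addr0.
have vu := coef_comm_sym uv.
have gg : coef_comm g g.
  have ug : coef_comm u g by apply: coef_commDr; [apply: coef_commDr|apply: coef_commMr].
  have vg : coef_comm v g by apply: coef_commDr; [apply: coef_commDr|apply: coef_commMr].
  by apply: coef_commDl; [apply: coef_commDl|apply: coef_commMl].
have gE : 1 + g = (1 + u) * (1 + v).
  by rewrite /g mulrDl !mulrDr !mul1r mulr1 -!addrA (addrCA v).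
have uvC : GRing.comm (1 + u) (1 + v).
  apply/coef_comm_comm/coef_commDl; first exact: coef_comm1l.
  by apply: coef_commDr => //; apply/coef_comm_sym/coef_comm1l.
have eg : euler (psln1p u + psln1p v) * (1 + g) = euler g.
  rewrite raddfD mulrDl gE mulrA euler_psln1p // uvC mulrA euler_psln1p //.
  by rewrite /g !raddfD /= eulerM !mulrDr !mulr1 (comm_euler uv) addrACA.
have g_inv : (1 + g) * psinv (1 + g) = 1.
  by apply: (proj1 (psinv_inverse _)); rewrite ps_addE g0 addr0.
have e0 : euler (psln1p g - (psln1p u + psln1p v)) = 0.
  have := congr1 (fun w => w * psinv (1 + g)) (etrans (euler_psln1p g0 gg) (esym eg)).
  by rewrite /= -!mulrA g_inv !mulr1 raddfB /= => ->; rewrite subrr.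
apply/eqP; rewrite -subr_eq0; apply/eqP; apply: (euler_ode_eq0 (Q := 0)) => //.
  by rewrite ps_subE ps_addE !psln1p0E addr0 subrr.
by rewrite e0 mul0r.
Qed.

Lemma psexp_shift a b q : a 0%N = 0 -> a * b = b * a + q -> GRing.comm q a ->
  psexp a * b = (b + q) * psexp a.
Proof.
move=> a0 ab qa.
have abk k : a ^+ k.+1 * b = b * a ^+ k.+1 + k.+1%:R *: (q * a ^+ k).
  elim: k => [|k IHk]; first by rewrite expr1 expr0 mulr1 scale1r.
  rewrite exprS -mulrA IHk mulrDr mulrA ab mulrDl -mulrA -exprS -scalerAr.
  rewrite [a * (q * _)]mulrA -qa -mulrA -exprS -addrA; congr (_ + _).
  by rewrite -[k.+2]add1n natrD scalerDl scale1r.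
have trunc m : exp_trunc m.+1 a * b = b * exp_trunc m.+1 a + q * exp_trunc m a.
  rewrite /exp_trunc mulr_suml !mulr_sumr big_ord_recl [X in _ = X + _]big_ord_recl.
  rewrite -addrA; congr (_ + _); first by rewrite -scalerAl -scalerAr !expr0 mul1r mulr1.
  rewrite -big_split; apply: eq_bigr => i _ /=.
  by rewrite -scalerAl -scalerAr abk scalerDr scalerA fact_scaleS -scalerAr.
apply: eq_from_below => m n ltnm; have ltnSm := ltnW ltnm.
rewrite (eq_belowMr b (psexp_trunc (m:=m.+1) a0) ltnSm) trunc mulrDl !ps_addE.
rewrite (eq_belowMl b (psexp_trunc (m:=m.+1) a0) ltnSm).
by rewrite (eq_belowMl q (psexp_trunc (m:=m) a0) ltnm).
Qed.

Lemma psexp0 : psexp 0 = 1 :> ps A.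
Proof.
apply/funext => n; rewrite psexpE /pseries big_ord_recl /= invr1 scale1r.
by rewrite big1 ?addr0 // => i _; rewrite expr0n scaler0.
Qed.

Lemma big_psexp_psXi (r : seq nat) (F : nat -> A) :
  {in r &, forall s t, GRing.comm (F s) (F t)} ->
  \prod_(s <- r) psexp (psXi (F s)) = psexp (psXi (\sum_(s <- r) F s)).
Proof.
elim: r => [|s r IHr] Fr; first by rewrite !big_nil raddf0 psexp0.
have Fr' : {in r &, forall s t, GRing.comm (F s) (F t)}.
  by move=> a b ar br; apply: Fr; rewrite inE ?ar ?br orbT.
rewrite !big_cons IHr // raddfD /= psexpD //; try by apply: coef_comm_psXi_psXi.
apply: coef_comm_psXi_psXi; rewrite big_seq; apply: commr_sum => t tr.
by apply: Fr; rewrite inE ?eqxx ?tr ?orbT.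
Qed.

Lemma psexp_intertwine_ln1p h g b : h 0%N = 0 -> g 0%N = 0 ->
  coef_comm h h -> coef_comm g g -> coef_comm h g ->
  h * b = b * (h + psln1p g) -> psexp h * b = b * (1 + g) * psexp h.
Proof.
move=> h0 g0 hh gg hg hb; set L := psln1p g.
have L0 : L 0%N = 0 by apply: psln1p0E.
have LL : coef_comm L L by apply: coef_comm_psln1pl => //; apply: coef_comm_psln1pr.
have hL : coef_comm h L by apply: coef_comm_psln1pr.
have hL0 : (h + L) 0%N = 0 by rewrite ps_addE h0 L0 addr0.
rewrite !psexpE (pseries_intertwine _ h0 hL0 hb) -!psexpE psexpD //.
rewrite psexp_psln1p // -mulrA; congr (_ * _); apply/commr_sym/coef_comm_comm.
apply: coef_comm_psexpr => //; apply: coef_commDl; first exact: coef_comm1l.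
exact: coef_comm_sym.
Qed.

End EulerOperator.

Lemma prod_intertwine (R : pzRingType) (G : nat -> R) m k0 P Q : (k0 < m)%N ->
  (forall k, (k < k0)%N -> G k * P = P * G k) ->
  G k0 * P = Q * G k0 ->
  (forall k, (k0 < k < m)%N -> G k * Q = Q * G k) ->
  \prod_(k <- rev (iota 0 m)) G k * P = Q * \prod_(k <- rev (iota 0 m)) G k.
Proof.
move=> k0m below at_k0 above.
have iotaS j : rev (iota 0 j.+1) = j :: rev (iota 0 j).
  by rewrite -addn1 iotaD rev_cat /= add0n.
have low j : (j <= k0)%N ->
    \prod_(k <- rev (iota 0 j)) G k * P = P * \prod_(k <- rev (iota 0 j)) G k.
  elim: j => [|j IHj] ljk; first by rewrite big_nil mul1r mulr1.
  by rewrite iotaS big_cons -mulrA IHj ?(ltnW ljk) // !mulrA below.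
elim: m k0m above => [|m IHm] // k0m above.
rewrite iotaS big_cons; move: k0m; rewrite ltnS leq_eqVlt => /orP[/eqP <-|k0m].
  by rewrite -mulrA low // mulrA at_k0 mulrA.
rewrite -mulrA IHm ?mulrA ?above //; first by rewrite k0m leqnn.
by move=> k /andP[k0k km]; apply: above; rewrite k0k ltnS ltnW.
Qed.

Lemma comm_mul_opposite_weights (R : pzRingType) (B : algType R) (X Y Hx Hy : B) (d1 d2 : R) :
  Hx * X = X * Hx - d1 *: X -> Hy * Y = Y * Hy - d2 *: Y ->
  GRing.comm Hy X -> GRing.comm Hx Y -> d1 + d2 = 0 ->
  GRing.comm (X * Y) (Hx + Hy).
Proof.
move=> HxX HyY HyX HxY d12; rewrite /GRing.comm mulrDl !mulrA HxX HyX.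
rewrite -[X * Hy * Y]mulrA HyY mulrBl -[X * Hx * Y]mulrA HxY mulrBr !mulrA.
by rewrite -scalerAl -scalerAr addrACA -opprD -scalerDl d12 scale0r subr0 mulrDr.
Qed.

Lemma commr_prod (R : pzSemiRingType) (I : eqType) (r : seq I) (F : I -> R) (u : R) :
  {in r, forall i, GRing.comm u (F i)} -> GRing.comm u (\prod_(i <- r) F i).
Proof.
move=> uF; rewrite big_seq; apply: (big_ind (GRing.comm u)) => //; first exact: commr1.
exact: commrM.
Qed.

Section GlRelations.
Variables (C : fieldType) (A : algType C) (N : nat).

Definition glidx i := (0 < i <= N)%N.

Lemma sum_delta_scale (r : seq nat) p (F : nat -> A) : uniq r ->
  \sum_(m <- r) ((m == p)%:R : C) *: F m = ((p \in r)%:R : C) *: F p.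
Proof.
move=> ur; have [pr|pNr] := boolP (p \in r).
  rewrite (bigD1_seq p) //= eqxx scale1r big1 ?addr0 // => m /negbTE ->.
  by rewrite scale0r.
rewrite scale0r big1_seq // => m /andP[_ mr].
have /negbTE -> : m != p by apply: contraNneq pNr => <-.
by rewrite scale0r.
Qed.

Variable e : nat -> nat -> A.
Hypothesis he : gl_family N e.

Lemma gl_mulC i j k l : glidx i -> glidx j -> glidx k -> glidx l ->
  e i j * e k l = e k l * e i j + (((j == k)%:R : C) *: e i l - ((l == i)%:R : C) *: e k j).
Proof. by move=> *; rewrite -he // addrC subrK. Qed.

Lemma gl_comm i j k l : glidx i -> glidx j -> glidx k -> glidx l -> j != k -> l != i ->
  GRing.comm (e i j) (e k l).
Proof.
by move=> ? ? ? ? /negbTE jk /negbTE li; rewrite /GRing.comm gl_mulC // jk li !scale0r subrr addr0.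
Qed.

Lemma diag_sum_mulC (r : seq nat) p q : uniq r -> {in r, forall m, glidx m} ->
  glidx p -> glidx q ->
  (\sum_(m <- r) e m m) * e p q =
  e p q * (\sum_(m <- r) e m m) + (((p \in r)%:R - (q \in r)%:R : C) *: e p q).
Proof.
move=> ur rr rp rq; rewrite mulr_suml mulr_sumr.
rewrite (eq_big_seq (fun m => e p q * e m m +
   (((m == p)%:R : C) *: e p q - ((m == q)%:R : C) *: e p q))); last first.
  move=> m mr; rewrite gl_mulC ?(rr m mr) //; congr (_ + (_ - _)).
    by case: eqP => [->|]; rewrite ?scale0r ?scale1r.
  by rewrite eq_sym; case: eqP => [->|]; rewrite ?scale0r ?scale1r.
by rewrite big_split /= sumrB !sum_delta_scale // scalerBl.
Qed.

Lemma mem_glrange m : (m \in index_iota 1 N.+1) = glidx m.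
Proof. by rewrite mem_index_iota ltnS. Qed.

Lemma comm_glI p q : glidx p -> glidx q -> GRing.comm (glI N e) (e p q).
Proof.
move=> rp rq; rewrite /GRing.comm /glI diag_sum_mulC ?iota_uniq //.
  by rewrite !mem_glrange rp rq subrr scale0r addr0.
by move=> m; rewrite mem_glrange.
Qed.

Lemma HP_mulC a p q : glidx a -> glidx p -> glidx q ->
  HP N e a * e p q = e p q * HP N e a + (((a == p)%:R - (q == a)%:R : C) *: e p q).
Proof.
move=> ra rp rq; rewrite /HP mulrBl mulrBr -scalerAl comm_glI // scalerAr.
rewrite gl_mulC // scalerBl addrAC; congr (_ + _).
by congr (_ - _); case: eqP => [->|]; rewrite ?scale0r ?scale1r.
Qed.

Lemma HP_mul_row a b : glidx a -> glidx b -> b != a ->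
  HP N e a * e a b = e a b * (HP N e a + 1).
Proof.
move=> ra rb /negbTE ba; rewrite HP_mulC // ba eqxx subr0 scale1r.
by rewrite [RHS]mulrDr mulr1.
Qed.

Definition perp_range i := index_iota i.+1 (N - i).+1.

Lemma mem_perp_range i m : (m \in perp_range i) = (i < m <= N - i)%N.
Proof. by rewrite mem_index_iota ltnS. Qed.

Lemma Hperp_mulC i p q : glidx p -> glidx q ->
  Hperp N e i * e p q = e p q * Hperp N e i -
     (((p \in perp_range i)%:R - (q \in perp_range i)%:R : C) *: e p q).
Proof.
move=> rp rq; rewrite /Hperp mulrBl mulrBr -scalerAl comm_glI // scalerAr.
rewrite (diag_sum_mulC (r := perp_range i)) ?iota_uniq ?opprD ?addrA //.
by move=> m; rewrite mem_perp_range /glidx; lia.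
Qed.

Definition comm_cartan u := forall m, glidx m -> GRing.comm u (e m m).

Lemma commr_diag_sum u (r : seq nat) : {in r, forall m, glidx m} -> comm_cartan u ->
  GRing.comm u (\sum_(m <- r) e m m).
Proof. by move=> rr uc; rewrite big_seq; apply: commr_sum => m /rr /uc. Qed.

Lemma commr_glI u : comm_cartan u -> GRing.comm u (glI N e).
Proof. by move=> uc; apply: commr_diag_sum => // m; rewrite mem_glrange. Qed.

Lemma commr_HP u a : glidx a -> comm_cartan u -> GRing.comm u (HP N e a).
Proof. by move=> ra uc; apply/commrD/commrN/commrZ/commr_glI; apply: uc. Qed.

Lemma commr_Hperp u i : comm_cartan u -> GRing.comm u (Hperp N e i).
Proof.
move=> uc; apply/commrD/commrN/commr_diag_sum => //; first exact/commrZ/commr_glI.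
by move=> m; rewrite mem_perp_range /glidx; lia.
Qed.

Lemma comm_cartan_HP a : glidx a -> comm_cartan (HP N e a).
Proof. by move=> ra m rm; rewrite /GRing.comm HP_mulC // eq_sym subrr scale0r addr0. Qed.

Lemma comm_cartan_Hperp i : comm_cartan (Hperp N e i).
Proof. by move=> m rm; rewrite /GRing.comm Hperp_mulC // subrr scale0r subr0. Qed.

Lemma comm_Hperp i i' : GRing.comm (Hperp N e i) (Hperp N e i').
Proof. exact/commr_Hperp/comm_cartan_Hperp. Qed.

End GlRelations.

Lemma Hperp_fam_add (C : fieldType) (A : algType C) N (x y : nat -> nat -> A) i :
  Hperp N (fam_add x y) i = Hperp N x i + Hperp N y i.
Proof. by rewrite /Hperp /glI /fam_add !big_split /= scalerDr opprD addrACA. Qed.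

Ltac glidx_lia := unfold glidx in *; lia.

Section TensorSum.
Variables (C : fieldType) (A : algType C) (N : nat) (x y : nat -> nat -> A).
Hypotheses (hx : gl_family N x) (hy : gl_family N y) (hxy : commuting_families x y).

Definition mid_range k := iota k.+2 (N - 2 * k - 2).

Definition chainT k := \sum_(s <- mid_range k) x k.+1 s * y s (N - k)%N.

Lemma mem_mid_range k s : (2 * k.+1 <= N)%N ->
  (s \in mid_range k) = (k.+1 < s < N - k)%N.
Proof. by move=> hk; rewrite mem_iota; apply/idP/idP; lia. Qed.

Lemma chainT_mulC_x k p q : (2 * k.+1 <= N)%N -> glidx N p -> glidx N q ->
  q != k.+1 -> (N - k)%N != p ->
  chainT k * x p q = x p q * chainT k +
    ((p \in mid_range k)%:R : C) *: (x k.+1 q * y p (N - k)%N).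
Proof.
move=> hk rp rq qk Nkp; rewrite /chainT mulr_suml mulr_sumr.
rewrite (eq_big_seq (fun s => x p q * (x k.+1 s * y s (N - k)%N) +
    ((s == p)%:R : C) *: (x k.+1 q * y p (N - k)%N))); last first.
  move=> s; rewrite mem_mid_range // => ms.
  rewrite -mulrA -hxy mulrA (gl_mulC hx) ?(negbTE qk) ?scale0r ?subr0; try glidx_lia.
  rewrite mulrDl mulrA; congr (_ + _).
  by case: eqP => [->|]; rewrite ?scale0r ?mul0r ?scale1r ?mul1r // -scalerAl.
by rewrite big_split /= sum_delta_scale ?iota_uniq.
Qed.

Lemma chainT_mulC_y k p q : (2 * k.+1 <= N)%N -> glidx N p -> glidx N q ->
  q != k.+1 -> (N - k)%N != p ->
  chainT k * y p q = y p q * chainT k -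
    ((q \in mid_range k)%:R : C) *: (x k.+1 q * y p (N - k)%N).
Proof.
move=> hk rp rq qk Nkp; rewrite /chainT mulr_suml mulr_sumr.
rewrite (eq_big_seq (fun s => y p q * (x k.+1 s * y s (N - k)%N) -
    ((s == q)%:R : C) *: (x k.+1 q * y p (N - k)%N))); last first.
  move=> s; rewrite mem_mid_range // => ms.
  rewrite -mulrA (gl_mulC hy) ?(negbTE Nkp) ?scale0r ?sub0r; try glidx_lia.
  rewrite mulrDr mulrA hxy -mulrA; congr (_ + _); rewrite mulrN -scalerAr eq_sym.
  by case: eqP => [->|] //; rewrite !scale0r oppr0.
by rewrite big_split /= sumrN sum_delta_scale ?iota_uniq.
Qed.

Lemma chainT_mulC k p q : (2 * k.+1 <= N)%N -> glidx N p -> glidx N q ->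
  q != k.+1 -> (N - k)%N != p ->
  chainT k * (x p q + y p q) = (x p q + y p q) * chainT k +
    (((p \in mid_range k)%:R - (q \in mid_range k)%:R : C) *: (x k.+1 q * y p (N - k)%N)).
Proof.
move=> hk rp rq qk Nkp; rewrite mulrDr chainT_mulC_x // chainT_mulC_y //.
by rewrite mulrDl scalerBl addrACA.
Qed.

End TensorSum.

Section PeriphericChain.
Variables (C : fieldType) (A : algType C) (N : nat) (x y : nat -> nat -> A).
Hypotheses (hx : gl_family N x) (hy : gl_family N y) (hxy : commuting_families x y).
Variables (z n : nat).
Hypotheses (z_gt0 : (0 < z)%N) (z_le : (2 * z <= N)%N) (z_ge : (N <= 2 * z + 1)%N)
  (nzN : (n + z)%N = N).
Hypothesis natr_neq0 : forall k, (k.+1%:R : C) != 0.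
Variable nu : nat -> C.

Lemma comm_yx i j k l : GRing.comm (y i j) (x k l).
Proof. exact/commr_sym/hxy. Qed.

Lemma comm_cartan_y i j : comm_cartan N x (y i j).
Proof. by move=> m _; apply: comm_yx. Qed.

Lemma comm_cartan_x i j : comm_cartan N y (x i j).
Proof. by move=> m _; apply: hxy. Qed.

Lemma comm_y_HP a i j : glidx N a -> GRing.comm (y i j) (HP N x a).
Proof. by move=> ra; apply: commr_HP => //; apply: comm_cartan_y. Qed.

Lemma comm_x_antidiag j j' : (0 < j < n)%N -> (0 < j' < n)%N ->
  GRing.comm (x j (N - j)%N) (x j' (N - j')%N).
Proof. by move=> *; apply: (gl_comm hx); try glidx_lia; apply/eqP; lia. Qed.

Lemma comm_chainT_terms k s t : (k < z)%N -> s \in mid_range N k -> t \in mid_range N k ->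
  GRing.comm (x k.+1 s * y s (N - k)%N) (x k.+1 t * y t (N - k)%N).
Proof.
move=> kz; rewrite !mem_mid_range; try lia; move=> ms mt.
have xst : GRing.comm (x k.+1 s) (x k.+1 t) by apply: (gl_comm hx); try glidx_lia; apply/eqP; lia.
have yst : GRing.comm (y s (N - k)%N) (y t (N - k)%N).
  by apply: (gl_comm hy); try glidx_lia; apply/eqP; lia.
apply/commrM; apply/commr_sym/commrM => //; exact/comm_yx.
Qed.

Lemma comm_chainT_Hperp k i : (k < z)%N ->
  GRing.comm (chainT N x y k) (Hperp N x i + Hperp N y i).
Proof.
move=> kz; rewrite /chainT big_seq; apply/commr_sym/commr_sum => s.
rewrite mem_mid_range; try lia; move=> ms; apply/commr_sym.
apply: (comm_mul_opposite_weights
  (d1 := ((k.+1 \in perp_range N i)%:R - (s \in perp_range N i)%:R))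
  (d2 := ((s \in perp_range N i)%:R - ((N - k)%N \in perp_range N i)%:R))).
- by rewrite (Hperp_mulC hx) //; glidx_lia.
- by rewrite (Hperp_mulC hy) //; glidx_lia.
- by apply/commr_sym; apply: commr_Hperp; apply: comm_cartan_x.
- by apply/commr_sym; apply: commr_Hperp; apply: comm_cartan_y.
have -> : (k.+1 \in perp_range N i) = ((N - k)%N \in perp_range N i).
  by rewrite !mem_perp_range; apply/idP/idP; lia.
by rewrite addrA subrK subrr.
Qed.

Lemma comm_HP_Hperp k i : (k < z)%N ->
  GRing.comm (HP N x k.+1) (Hperp N x i + Hperp N y i).
Proof.
move=> kz; apply/commrD; apply: commr_Hperp; first by apply: (comm_cartan_HP hx); glidx_lia.
by move=> m _; apply/commr_sym/comm_y_HP; glidx_lia.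
Qed.

Lemma comm_y_Hperp k i : (k < z)%N ->
  GRing.comm (y k.+1 (N - k)%N) (Hperp N x i + Hperp N y i).
Proof.
move=> kz; apply/commrD; first by apply: commr_Hperp; apply: comm_cartan_y.
rewrite /GRing.comm [RHS](Hperp_mulC hy); try glidx_lia.
suff -> : (k.+1 \in perp_range N i) = ((N - k)%N \in perp_range N i).
  by rewrite subrr scale0r subr0.
by rewrite !mem_perp_range; apply/idP/idP; lia.
Qed.

Lemma comm_chainT_antidiag k j : (k < z)%N -> (0 < j < n)%N -> k.+1 != j ->
  GRing.comm (chainT N x y k) (x j (N - j)%N + y j (N - j)%N).
Proof.
move=> kz jn kj; rewrite /GRing.comm chainT_mulC //; try glidx_lia; try (apply/eqP; lia).
rewrite !mem_mid_range; try lia.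
have -> : (k.+1 < j < N - k)%N = (k.+1 < N - j < N - k)%N.
  by move/eqP: kj => kj; apply/idP/idP; lia.
by rewrite subrr scale0r addr0.
Qed.

Lemma chainT_mul_antidiag k j : (k < z)%N -> (0 < j < n)%N -> k.+1 = j ->
  chainT N x y k * (x j (N - j)%N + y j (N - j)%N) =
  (x j (N - j)%N + y j (N - j)%N) * chainT N x y k - x j (N - j)%N * y j (N - k)%N.
Proof.
move=> kz jn kj; rewrite chainT_mulC //; try glidx_lia; try (apply/eqP; lia).
rewrite !mem_mid_range; try lia.
have -> : (k.+1 < j < N - k)%N = false by apply/negbTE/negP; lia.
have -> : (k.+1 < N - j < N - k)%N = true by apply/idP; lia.
by rewrite sub0r scaleN1r kj.
Qed.

Lemma comm_chainT_corner k j : (k < z)%N -> (0 < j < n)%N -> k.+1 = j ->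
  GRing.comm (x j (N - j)%N * y j (N - k)%N) (chainT N x y k).
Proof.
move=> kz jn kj; rewrite /chainT big_seq; apply: commr_sum => s.
rewrite mem_mid_range; try lia; move=> ms.
have xx : GRing.comm (x j (N - j)%N) (x k.+1 s) by apply: (gl_comm hx); try glidx_lia; apply/eqP; lia.
have yy : GRing.comm (y j (N - k)%N) (y s (N - k)%N).
  by apply: (gl_comm hy); try glidx_lia; apply/eqP; lia.
apply/commr_sym/commrM; apply/commr_sym/commrM => //; exact/commr_sym/comm_yx.
Qed.

Lemma comm_HP_antidiag k j : (k < z)%N -> (0 < j < n)%N -> k.+1 != j ->
  GRing.comm (HP N x k.+1) (x j (N - j)%N + y j (N - j)%N).
Proof.
move=> kz jn kj; apply/commrD; last by apply/commr_sym/comm_y_HP; glidx_lia.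
rewrite /GRing.comm (HP_mulC hx); try glidx_lia.
have /negbTE -> : (N - j)%N != k.+1 by apply/eqP; lia.
by rewrite (negbTE kj) subrr scale0r addr0.
Qed.

Lemma comm_y_antidiag k j : (k < z)%N -> (0 < j < n)%N ->
  GRing.comm (y k.+1 (N - k)%N) (y j (N - j)%N).
Proof. by move=> kz jn; apply: (gl_comm hy); try glidx_lia; apply/eqP; lia. Qed.

Section Root.
Variable k0 : nat.
Hypothesis k0z : (k0 < z)%N.

Lemma comm_chainT_root_below k : (k < k0)%N ->
  GRing.comm (chainT N x y k) (x k0.+1 (N - k0)%N + y k0.+1 (N - k0)%N).
Proof.
move=> kk0; rewrite /GRing.comm chainT_mulC //; try glidx_lia; try (apply/eqP; lia).
rewrite !mem_mid_range; try lia.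
have -> : (k.+1 < k0.+1 < N - k)%N = true by apply/idP; lia.
have -> : (k.+1 < N - k0 < N - k)%N = true by apply/idP; lia.
by rewrite subrr scale0r addr0.
Qed.

Lemma comm_chainT_root_above k : (k < z)%N -> (k0 <= k)%N ->
  GRing.comm (chainT N x y k) (x k0.+1 (N - k0)%N) /\
  GRing.comm (chainT N x y k) (y k0.+1 (N - k0)%N).
Proof.
move=> kz k0k; rewrite /GRing.comm chainT_mulC_x // ?chainT_mulC_y //;
  try glidx_lia; try (apply/eqP; lia).
rewrite !mem_mid_range; try lia.
have -> : (k.+1 < k0.+1 < N - k)%N = false by apply/negbTE/negP; lia.
have -> : (k.+1 < N - k0 < N - k)%N = false by apply/negbTE/negP; lia.
by rewrite !scale0r addr0 subr0.
Qed.

Lemma comm_HP_root k : (k < z)%N -> k != k0 ->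
  GRing.comm (HP N x k.+1) (x k0.+1 (N - k0)%N).
Proof.
move=> kz kk0; rewrite /GRing.comm (HP_mulC hx); try glidx_lia.
have /negbTE -> : (N - k0)%N != k.+1 by apply/eqP; lia.
by rewrite eqSS (negbTE kk0) subrr scale0r addr0.
Qed.

Lemma comm_y_root k : (k < z)%N ->
  GRing.comm (y k.+1 (N - k)%N) (y k0.+1 (N - k0)%N).
Proof. by move=> kz; apply: (gl_comm hy); try glidx_lia; apply/eqP; lia. Qed.

End Root.

Definition chain_exp k : ps A := psexp (psXi (nu k.+1 *: chainT N x y k)).
Definition chain_Hsigma k : ps A :=
  psC (HP N x k.+1) * psln1p (psXi (nu k.+1 *: y k.+1 (N - k)%N)).
Definition chain_factor k : ps A := chain_exp k * psexp (chain_Hsigma k).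

Lemma chain_Hsigma0E k : chain_Hsigma k 0%N = 0.
Proof. by rewrite /chain_Hsigma ps_mul0E psln1p0E mulr0. Qed.

Lemma FP_chain_factor k : (k < z)%N -> FP N x y k (nu k.+1) = chain_factor k.
Proof.
move=> kz; congr (_ * _).
  rewrite psprodE big_map big_psexp_psXi /chain_exp /chainT ?scaler_sumr // => s t ms mt.
  by apply/commrZZ/comm_chainT_terms.
by congr psexp; apply/funext => m; rewrite /chain_Hsigma psC_mulE.
Qed.

Lemma FPchain_prod : FPchain N x y z.-1 nu = \prod_(k <- rev (iota 0 z)) chain_factor k.
Proof.
rewrite /FPchain psprodE big_map prednK //; apply: eq_big_seq => k.
by rewrite mem_rev mem_iota add0n => /andP[_ kz]; apply: FP_chain_factor.
Qed.

Lemma chain_prod0E : (\prod_(k <- rev (iota 0 z)) chain_factor k) 0%N = 1.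
Proof.
elim: (rev _) => [|k r IHr]; first by rewrite big_nil.
by rewrite big_cons ps_mul0E IHr /chain_factor /chain_exp ps_mul0E !psexp0E !mulr1.
Qed.

Lemma coef_comm_chain_Hsigma k P : (k < z)%N ->
  coef_comm P (psC (HP N x k.+1)) -> coef_comm P (psC (y k.+1 (N - k)%N)) ->
  coef_comm P (chain_Hsigma k).
Proof.
move=> kz PH Py; apply: coef_commMr => //.
by apply: coef_comm_psln1pr => //; apply: coef_comm_psXiZ.
Qed.

Lemma comm_chain_factor k P : (k < z)%N ->
  coef_comm P (psC (chainT N x y k)) -> coef_comm P (psC (HP N x k.+1)) ->
  coef_comm P (psC (y k.+1 (N - k)%N)) -> GRing.comm P (chain_factor k).
Proof.
move=> kz PT PH Py; apply/commrM; apply/coef_comm_comm/coef_comm_psexpr => //.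
  exact: coef_comm_psXiZ.
by apply: chain_Hsigma0E.
by apply: coef_comm_chain_Hsigma.
Qed.

Lemma psexp_chain_Hsigma_shift k b : (k < z)%N ->
  psC (HP N x k.+1) * b = b * (psC (HP N x k.+1) + 1) ->
  coef_comm b (psXi (nu k.+1 *: y k.+1 (N - k)%N)) ->
  psexp (chain_Hsigma k) * b =
  b * (1 + psXi (nu k.+1 *: y k.+1 (N - k)%N)) * psexp (chain_Hsigma k).
Proof.
move=> kz Hb bw; set w := psXi _.
have HPy : GRing.comm (HP N x k.+1) (y k.+1 (N - k)%N) by apply/commr_sym/comm_y_HP; glidx_lia.
have HPw : coef_comm (psC (HP N x k.+1)) w by apply/coef_comm_psC_psXi/commrZ/HPy.
have ww : coef_comm w w by apply/coef_comm_psXi_psXi/commr_refl.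
have Lw : coef_comm (psln1p w) w by apply: coef_comm_psln1pl.
have Lb : coef_comm (psln1p w) b by apply/coef_comm_psln1pl/coef_comm_sym.
apply: psexp_intertwine_ln1p => //; first exact: chain_Hsigma0E.
- apply: coef_comm_chain_Hsigma => //; apply: coef_commMl.
  + exact/coef_comm_psC_psC/commr_refl.
  + exact/coef_comm_psln1p_psC/commr_sym/HPy.
  + exact/coef_comm_psC_psC/HPy.
  + exact/coef_comm_psln1p_psC/commr_refl.
- exact: coef_commMl.
by rewrite /chain_Hsigma -mulrA (coef_comm_comm Lb) mulrA Hb -mulrA mulrDl mul1r.
Qed.

Lemma comm_chain_factor_antidiag j : (0 < j < n)%N ->
  GRing.comm (psC (x j (N - j)%N + y j (N - j)%N)) (chain_factor j.-1).
Proof.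
move=> jn; set k := j.-1.
have kj : k.+1 = j by rewrite /k prednK //; lia.
have kz : (k < z)%N by rewrite /k; lia.
set xE := x j (N - j)%N; set yE := y j (N - j)%N.
set w := nu k.+1 *: y k.+1 (N - k)%N; set Q := psXi (xE * w).
have J_x : psexp (chain_Hsigma k) * psC xE = psC xE * (1 + psXi w) * psexp (chain_Hsigma k).
  apply: psexp_chain_Hsigma_shift => //; last by apply/coef_comm_psC_psXi/commrZ/hxy.
  by rewrite -(rmorph1 (@psC C A)) -rmorphD -!rmorphM kj /xE HP_mul_row //; glidx_lia.
have J_y : GRing.comm (psC yE) (psexp (chain_Hsigma k)).
  apply/coef_comm_comm/coef_comm_psexpr; first exact: chain_Hsigma0E.
  apply: coef_comm_chain_Hsigma => //; apply: coef_comm_psC_psC.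
    by apply: comm_y_HP; glidx_lia.
  by rewrite /yE -kj; apply/commr_sym; apply: comm_y_antidiag => //; rewrite kj.
(* exp(H^P (x) sigma) adds Q to Delta(E), and exp(xi nu T) removes it again. *)
have J_xy : psexp (chain_Hsigma k) * psC (xE + yE) = (psC (xE + yE) + Q) * psexp (chain_Hsigma k).
  by rewrite rmorphD mulrDr J_x -J_y mulrDr mulr1 psC_psXi -mulrDl addrAC.
have TQ : GRing.comm (nu k.+1 *: chainT N x y k) (xE * w).
  by rewrite /w -scalerAr; apply/commrZ/commr_sym/commrZ; rewrite kj; apply: comm_chainT_corner.
have E_xy : chain_exp k * psC (xE + yE) = (psC (xE + yE) - Q) * chain_exp k.
  apply: psexp_shift => //; last by apply/commr_sym/commrN/coef_comm_comm/coef_comm_psXi_psXi.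
  rewrite psXi_psC psC_psXi -raddfN -raddfD; congr psXi.
  by rewrite -scalerAl chainT_mul_antidiag // scalerBr -scalerAr /w kj !scalerAr.
have E_Q : GRing.comm (chain_exp k) Q.
  apply/commr_sym/coef_comm_comm/coef_comm_psexpr => //.
  exact/coef_comm_psXi_psXi/commr_sym.
apply/commr_sym; rewrite /GRing.comm /chain_factor -mulrA J_xy mulrA mulrDr E_xy E_Q.
by rewrite -mulrDl subrK mulrA.
Qed.

Lemma twist_Hperp i :
  twist (FPchain N x y z.-1 nu) (psC (Hperp N (fam_add x y) i)) =
  psC (Hperp N x i) + psC (Hperp N y i).
Proof.
rewrite Hperp_fam_add rmorphD FPchain_prod; apply: twist_intertwine; first exact: chain_prod0E.
apply/commr_sym/commr_prod => k; rewrite mem_rev mem_iota add0n => /andP[_ kz].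
rewrite -rmorphD; apply: comm_chain_factor => //; apply: coef_comm_psC_psC.
- exact/commr_sym/comm_chainT_Hperp.
- exact/commr_sym/comm_HP_Hperp.
- exact/commr_sym/comm_y_Hperp.
Qed.

Lemma twist_antidiag j : (0 < j < n)%N ->
  twist (FPchain N x y z.-1 nu) (psC (fam_add x y j (N - j)%N)) =
  psC (x j (N - j)%N) + psC (y j (N - j)%N).
Proof.
move=> jn; rewrite -rmorphD FPchain_prod; apply: twist_intertwine; first exact: chain_prod0E.
apply/commr_sym/commr_prod => k; rewrite mem_rev mem_iota add0n => /andP[_ kz].
have [<-|kj] := eqVneq j.-1 k; first exact: comm_chain_factor_antidiag.
have kj' : k.+1 != j by apply: contraNneq kj => <-.
apply: comm_chain_factor => //; apply: coef_comm_psC_psC.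
- exact/commr_sym/comm_chainT_antidiag.
- exact/commr_sym/comm_HP_antidiag.
- by apply/commr_sym/commrD; [apply: comm_yx | apply: comm_y_antidiag].
Qed.

Section Sigma.
Variable k0 : nat.
Hypothesis k0z : (k0 < z)%N.
Let xE := x k0.+1 (N - k0)%N.
Let yE := y k0.+1 (N - k0)%N.
Let u := psXi (nu k0.+1 *: xE).
Let v := psXi (nu k0.+1 *: yE).

Lemma comm_sigma_chain_factor_below k : (k < k0)%N ->
  GRing.comm (psln1p (u + v)) (chain_factor k).
Proof.
move=> kk0; have kz : (k < z)%N by lia.
rewrite -raddfD -scalerDr; apply: comm_chain_factor => //; apply: coef_comm_psln1p_psC.
- exact/commr_sym/comm_chainT_root_below.
- apply/commr_sym/commrD; last by apply/commr_sym/comm_y_HP; glidx_lia.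
  by apply: comm_HP_root => //; rewrite ltn_eqF.
- by apply/commr_sym/commrD; [apply: comm_yx | apply: comm_y_root].
Qed.

Lemma comm_sigma_chain_factor_above k : (k0 < k < z)%N ->
  GRing.comm (psln1p u + psln1p v) (chain_factor k).
Proof.
move=> /andP[k0k kz]; have [Tx Ty] := comm_chainT_root_above k0z kz (ltnW k0k).
apply: comm_chain_factor => //; apply: coef_commDl; apply: coef_comm_psln1p_psC.
- exact/commr_sym.
- exact/commr_sym.
- by apply/commr_sym/comm_HP_root => //; rewrite gtn_eqF.
- by apply/comm_y_HP; glidx_lia.
- exact: hxy.
- exact/commr_sym/comm_y_root.
Qed.

(* Conjugating by exp(H^P (x) sigma) turns 1 + u + v into (1 + u)(1 + v). *)
Lemma chain_factor_sigma_intertwine :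
  chain_factor k0 * psln1p (u + v) = (psln1p u + psln1p v) * chain_factor k0.
Proof.
set J := psexp (chain_Hsigma k0).
have J_u : J * u = u * (1 + v) * J.
  apply: psexp_chain_Hsigma_shift => //; last exact/coef_comm_psXi_psXi/commrZZ/hxy.
  rewrite -(rmorph1 (@psC C A)) -rmorphD psC_psXi psXi_psC /u /xE; congr psXi.
  by rewrite -scalerAr -scalerAl HP_mul_row //; glidx_lia.
have J_v : GRing.comm v J.
  apply/coef_comm_comm/coef_comm_psexpr; first exact: chain_Hsigma0E.
  apply: coef_comm_chain_Hsigma => //; apply/coef_comm_sym/coef_comm_psC_psXi/commrZ.
    by apply/commr_sym/comm_y_HP; glidx_lia.
  exact: commr_refl.
have J_uv : J * (u + v) = (u + v + u * v) * J.
  by rewrite mulrDr J_u -J_v mulrDr mulr1 -mulrDl addrAC.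
have [JV VJ] : J * psinv J = 1 /\ psinv J * J = 1 by apply: psinv_inverse; apply: psexp0E.
have uu : coef_comm u u by apply/coef_comm_psXi_psXi/commr_refl.
have vv : coef_comm v v by apply/coef_comm_psXi_psXi/commr_refl.
have uv : coef_comm u v by apply/coef_comm_psXi_psXi/commrZZ/hxy.
have J_ln : J * psln1p (u + v) = (psln1p u + psln1p v) * J.
  have uv0 : (u + v) 0%N = 0 by rewrite ps_addE addr0.
  have -> : psln1p u + psln1p v = psln1p (J * (u + v) * psinv J).
    by rewrite J_uv -mulrA JV mulr1 psln1p_mul.
  by rewrite !psln1pE (pseries_conj _ JV VJ uv0) -mulrA VJ mulr1.
have E_ln : GRing.comm (chain_exp k0) (psln1p u + psln1p v).
  have [Tx Ty] := comm_chainT_root_above k0z k0z (leqnn k0).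
  apply/commr_sym/coef_comm_comm/coef_comm_psexpr => //.
  by apply: coef_commDl; apply: coef_comm_psln1pl => //; apply/coef_comm_psXi_psXi/commrZZ/commr_sym.
by rewrite /chain_factor -mulrA -/J J_ln mulrA E_ln mulrA.
Qed.

End Sigma.

Lemma Hperp_antidiag_bracket i j : (0 < i < n)%N -> (0 < j < n)%N ->
  Hperp N x i * x j (N - j)%N - x j (N - j)%N * Hperp N x i = (i == j)%:R *: x j (N - j)%N.
Proof.
move=> i_n j_n; rewrite (Hperp_mulC hx); try glidx_lia.
rewrite addrAC subrr add0r -scaleNr opprB !mem_perp_range.
have -> : (i < j <= N - i)%N = (i < j)%N by apply/idP/idP; lia.
have -> : (i < N - j <= N - i)%N = (i <= j)%N by apply/idP/idP; lia.
by case: ltngtP => _; rewrite ?subrr ?subr0.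
Qed.

Lemma comm_sigma k k' : (k < z)%N -> (k' < z)%N ->
  GRing.comm (sigma x k.+1 (N - k) (nu k.+1)) (sigma x k'.+1 (N - k') (nu k'.+1)).
Proof.
move=> kz k'z; apply/coef_comm_comm/coef_comm_psln1pl => //.
apply/coef_comm_psln1pr => //; apply/coef_comm_psXi_psXi/commrZZ.
by apply: (gl_comm hx); try glidx_lia; apply/eqP; lia.
Qed.

Lemma comm_sigma_antidiag k j : (k < z)%N -> (0 < j < n)%N ->
  GRing.comm (sigma x k.+1 (N - k) (nu k.+1)) (psC (x j (N - j)%N)).
Proof.
move=> kz jn; apply/coef_comm_comm/coef_comm_psln1p_psC.
by apply: (gl_comm hx); try glidx_lia; apply/eqP; lia.
Qed.

Lemma twist_sigma k : (k < z)%N ->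
  twist (FPchain N x y z.-1 nu) (sigma (fam_add x y) k.+1 (N - k) (nu k.+1)) =
  sigma x k.+1 (N - k) (nu k.+1) + sigma y k.+1 (N - k) (nu k.+1).
Proof.
move=> kz; rewrite /sigma [fam_add _ _ _ _]/= scalerDr raddfD FPchain_prod.
apply: twist_intertwine; first exact: chain_prod0E.
apply: (prod_intertwine (k0 := k)) => //.
- by move=> k' k'k; apply/commr_sym/comm_sigma_chain_factor_below.
- exact: chain_factor_sigma_intertwine.
by move=> k' k'k; apply/commr_sym/comm_sigma_chain_factor_above.
Qed.

End PeriphericChain.

Lemma Cplx_natr_neq0 k : (k.+1%:R : Cplx) != 0.
Proof. by rewrite (Num.Theory.pnatr_eq0 Rdefinitions.R[i]). Qed.

Theorem mainTheorem4 (N : nat) (hN : (3 <= N)%N) (nu : nat -> Cplx)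
    (A : algType Cplx) (x y : nat -> nat -> A)
    (hx : gl_family N x) (hy : gl_family N y) (hxy : commuting_families x y) :
  let z := N./2 in
  let n := N.+1./2 in
  let F := FPchain N x y z.-1 nu in
  let D := fam_add x y in
  (forall k, (k < z)%N ->
     twist F (sigma D k.+1 (N - k) (nu k.+1)) =
     psadd (sigma x k.+1 (N - k) (nu k.+1)) (sigma y k.+1 (N - k) (nu k.+1))) /\
  (forall j, (0 < j < n)%N ->
     twist F (psC (D j (N - j)%N)) = psadd (psC (x j (N - j)%N)) (psC (y j (N - j)%N))) /\
  (forall i, (0 < i < n)%N ->
     twist F (psC (Hperp N D i)) = psadd (psC (Hperp N x i)) (psC (Hperp N y i))) /\
  (forall i j, (0 < i < n)%N -> (0 < j < n)%N ->
     Hperp N x i * x j (N - j)%N - x j (N - j)%N * Hperp N x i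
       = (i == j)%:R *: x j (N - j)%N) /\
  (forall i i', (0 < i < n)%N -> (0 < i' < n)%N ->
     Hperp N x i * Hperp N x i' = Hperp N x i' * Hperp N x i) /\
  (forall k k', (k < z)%N -> (k' < z)%N ->
     psmul (sigma x k.+1 (N - k) (nu k.+1)) (sigma x k'.+1 (N - k') (nu k'.+1)) =
     psmul (sigma x k'.+1 (N - k') (nu k'.+1)) (sigma x k.+1 (N - k) (nu k.+1))) /\
  (forall j j', (0 < j < n)%N -> (0 < j' < n)%N ->
     x j (N - j)%N * x j' (N - j')%N = x j' (N - j')%N * x j (N - j)%N) /\
  (forall k j, (k < z)%N -> (0 < j < n)%N ->
     psmul (sigma x k.+1 (N - k) (nu k.+1)) (psC (x j (N - j)%N)) =
     psmul (psC (x j (N - j)%N)) (sigma x k.+1 (N - k) (nu k.+1))).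
Proof.
move=> z n F D.
have [z_gt0 z_le z_ge nzN] : [/\ 0 < z, 2 * z <= N, N <= 2 * z + 1 & n + z = N]%N.
  have n2 : n = (odd N + z)%N by rewrite /n -uphalf_half.
  by move: (odd_double_half N) hN; rewrite n2 -/z; case: (odd N) => /= *; split; lia.
have natr_neq0 := Cplx_natr_neq0.
split; first exact: (twist_sigma hx hy hxy z_gt0 z_le z_ge nzN natr_neq0 nu).
split; first exact: (twist_antidiag hx hy hxy z_gt0 z_le z_ge nzN natr_neq0 nu).
split; first by move=> i _; apply: (twist_Hperp hx hy hxy z_gt0 z_le z_ge nzN natr_neq0 nu).
split; first exact: (Hperp_antidiag_bracket hx z_gt0 z_le z_ge nzN).
split; first by move=> i i' _ _; apply: (comm_Hperp hx).
split; first exact: (comm_sigma hx z_gt0 z_le z_ge nzN nu).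
split; first exact: (comm_x_antidiag hx z_gt0 z_le z_ge nzN).
exact: (comm_sigma_antidiag hx z_gt0 z_le z_ge nzN nu).
Qed.
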